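(* Let $G$ be a group, $X$ a right $G$-set and $A$ a $G$-graded $k$-algebra, and let $\mathcal G=kX\otimes-:\mathcal M_A\to\mathrm{gr}\text{-}(G,X,A)$. (1) If $X$ contains a nonempty finite $G$-subset $X'$ whose cardinality $\#X'$ is invertible in $k$, then $\mathcal G$ is separable. (2) If $A\neq 0$ is strongly graded and $\mathcal G$ is separable, then $X$ contains a nonempty finite $G$-subset.
   Context: $A=\bigoplus_{g\in G}A_g$ with $A_gA_h\subseteq A_{gh}$ and $1\in A_1$; strongly graded means $A_gA_h=A_{gh}$ for all $g,h$. $\mathrm{gr}\text{-}(G,X,A)$ is the category of right $A$-modules $M=\bigoplus_{x\in X}M_x$ with $M_xA_g\subseteq M_{x\cdot g}$, morphisms graded $A$-linear maps. $\mathcal G(N)=kX\otimes N$ with grading $(kX\otimes N)_x=x\otimes N$ and action $(x\otimes n)a_g=x\cdot g\otimes na_g$ for $a_g\in A_g$; it is right adjoint to the forgetful functor. A $G$-subset of $X$ is a subset $X'$ with $x'\cdot g\in X'$ for all $x'\in X'$, $g\in G$. A functor is separable if $\mathrm{Hom}(M,N)\to\mathrm{Hom}(\mathcal GM,\mathcal GN)$ has a left inverse natural in $M,N$. *)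

From Stdlib Require Import List.
From HB Require Import structures.
From mathcomp Require Import all_boot all_order all_algebra.
From mathcomp Require Import monoid.

Set Implicit Arguments.
Unset Strict Implicit.
Unset Printing Implicit Defensive.

Import GRing.Theory.
Local Open Scope ring_scope.

Definition is_right_action (G : groupType) (X : Type) (act : X -> G -> X) :=
  (forall x, act x 1%g = x) /\
  (forall x g h, act (act x g) h = act x (g * h)%g).

Definition is_Gsubset (G : groupType) (X : Type) (act : X -> G -> X)
  (S : X -> Prop) := forall x g, S x -> S (act x g).

(* s is a duplicate-free enumeration of S (so S is finite, #S = length s). *)
Definition enumerates (X : Type) (S : X -> Prop) (s : list X) :=
  NoDup s /\ forall x, S x <-> In x s.

Definition invertible (k : comPzRingType) (x : k) := exists u : k, u * x = 1.

(* A k-algebra: a ring A with a ring morphism iota : k -> A whose image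
   is central (A = 0 is allowed). *)
Definition central_image (k : comPzRingType) (A : pzRingType)
  (iota : {rmorphism k -> A}) := forall (c : k) (a : A), iota c * a = a * iota c.

(* A G-grading A = (+)_{g in G} A_g of the k-algebra A; deg g is A_g. *)
Record is_grading (k : comPzRingType) (G : groupType) (A : pzRingType)
    (iota : {rmorphism k -> A}) (deg : G -> A -> Prop) : Prop := {
  grading0 : forall g, deg g 0;
  gradingD : forall g a b, deg g a -> deg g b -> deg g (a + b);
  gradingZ : forall g c a, deg g a -> deg g (iota c * a);
  grading_span : forall a : A, exists (s : seq G) (f : G -> A),
      (forall g, deg g (f g)) /\ a = \sum_(g <- s) f g;
  grading_direct : forall (s : seq G) (f : G -> A),
      uniq s -> (forall g, deg g (f g)) -> \sum_(g <- s) f g = 0 ->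
      forall g, g \in s -> f g = 0;
  gradingM : forall g h a b, deg g a -> deg h b -> deg (g * h)%g (a * b);
  grading1 : deg 1%g 1
}.

(* Strongly graded: A_g A_h = A_{gh}, i.e. every element of A_{gh} is a
   finite sum of products a_g b_h (the inclusion ⊆ is part of is_grading). *)
Definition strongly_graded (G : groupType) (A : pzRingType)
  (deg : G -> A -> Prop) :=
  forall g h (c : A), deg (g * h)%g c ->
    exists s : seq (A * A),
      (forall p, p \in s -> deg g p.1 /\ deg h p.2) /\
      c = \sum_(p <- s) p.1 * p.2.

Record rmod (A : pzRingType) := RMod {
  rmod_sort :> zmodType;
  ract : rmod_sort -> A -> rmod_sort;
  ractDl : forall a m m', ract (m + m') a = ract m a + ract m' a;
  ractDr : forall m a b, ract m (a + b) = ract m a + ract m b;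
  ract1 : forall m, ract m 1 = m;
  ractA : forall m a b, ract (ract m a) b = ract m (a * b)
}.

Definition is_Ahom (A : pzRingType) (M N : rmod A) (f : M -> N) :=
  (forall m m', f (m + m') = f m + f m') /\
  (forall m a, f (ract m a) = ract (f m) a).

(* As a k-module, kX (x) N = (+)_{x in X} x (x) N, with (kX (x) N)_x = x (x) N
   and (x (x) n) a_g = x.g (x) n a_g.  A graded A-linear map
   kX (x) M -> kX (x) N maps each x (x) M into x (x) N, hence is the same
   thing as a family (phi_x)_{x in X} of additive maps M -> N (phi_x being the
   restriction to the component x (x) M ≅ M), and A-linearity is exactly
   phi_{x.g}(m a_g) = phi_x(m) a_g for homogeneous a_g in A_g.
   [grhom] describes Hom_{gr-(G,X,A)}(G M, G N) in these terms. *)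
Definition grhom (G : groupType) (X : Type) (act : X -> G -> X)
  (A : pzRingType) (deg : G -> A -> Prop) (M N : rmod A) (phi : X -> M -> N) :=
  (forall x m m', phi x (m + m') = phi x m + phi x m') /\
  (forall x g a m, deg g a -> phi (act x g) (ract m a) = ract (phi x m) a).

(* G on morphisms: G f = id_{kX} (x) f, i.e. the family (f)_{x in X}. *)
Definition Gmap (X : Type) (A : pzRingType) (M N : rmod A) (f : M -> N)
  : X -> M -> N := fun _ => f.

Definition separable_G (G : groupType) (X : Type) (act : X -> G -> X)
  (A : pzRingType) (deg : G -> A -> Prop) :=
  exists P : forall M N : rmod A, (X -> M -> N) -> M -> N,
    (forall (M N : rmod A) (phi : X -> M -> N),
        grhom act deg phi -> is_Ahom (P M N phi)) /\
    (forall (M N : rmod A) (f : M -> N),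
        is_Ahom f -> forall m, P M N (@Gmap X A M N f) m = f m) /\
    (forall (M M' N N' : rmod A) (f : M' -> M) (h : N -> N') (phi : X -> M -> N),
        is_Ahom f -> is_Ahom h -> grhom act deg phi ->
        forall m, P M' N' (fun x => h \o phi x \o f) m = h (P M N phi (f m))).

(* (1) With u the inverse of #X' in k, m ↦ (Σ_{x ∈ X'} φ_x(m))·u is a left inverse
   of f ↦ kX ⊗ f, natural in both arguments; it is A-linear because
   φ_{x·g}(m a_g) = φ_x(m) a_g and X' is stable under every g.
   (2) Let P be a natural left inverse and ν := P(x ↦ (n ↦ x ⊗ n))(1) ∈ kX ⊗ A, a
   finitely supported function X → A.  Naturality along the augmentation kX ⊗ A → A
   gives Σ_x ν_x = 1, so the support of ν is finite and nonempty; naturality along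
   left multiplication by b ∈ A_g gives b ν_y = ν_{y·g⁻¹} b, and then 1 ∈ A_g A_{g⁻¹}
   makes the support G-stable. *)

From Stdlib Require Import List.
From mathcomp Require Import all_boot all_order all_algebra.
From mathcomp Require Import boolp.
From mathcomp Require Import finmap.
From mathcomp.multinomials Require Import monalg.

Set Implicit Arguments.
Unset Strict Implicit.

Import GRing.Theory.
Local Open Scope ring_scope.

Lemma InP (T : eqType) (x : T) (s : seq T) : reflect (List.In x s) (x \in s).
Proof.
elim: s => [|y s IHs] /=; first by right.
rewrite inE; apply: (iffP orP) => [[/eqP->|/IHs]|[->|/IHs]];
  by [left|right|rewrite eqxx; left].
Qed.

Lemma NoDupP (T : eqType) (s : seq T) : reflect (NoDup s) (uniq s).
Proof.
elim: s => [|x s IHs] /=; first by left; constructor.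
apply: (iffP andP) => [[/InP xNs /IHs]|/NoDup_cons_iff[xNs /IHs]]; first by constructor.
by split=> //; apply/InP.
Qed.

Lemma sumr_const_length (V : zmodType) (T : Type) (s : list T) (c : V) :
  \sum_(x <- s) c = c *+ length s.
Proof. by elim: s => [|x s IHs]; rewrite ?big_nil // big_cons IHs mulrS. Qed.

Lemma big_pred1_uniq (V : zmodType) (I : eqType) (r : seq I) (i : I) (F : I -> V) :
  uniq r -> i \in r -> \sum_(j <- r | j == i) F j = F i.
Proof.
move=> r_uniq ir; rewrite (big_rem _ ir) /= eqxx big1_seq ?addr0 // => j /andP[/eqP-> ].
by rewrite mem_rem_uniqF.
Qed.

Lemma additive_sum (U V : zmodType) (f : U -> V) (I : Type) (r : seq I) (F : I -> U) :
  {morph f : u v / u + v} -> f (\sum_(i <- r) F i) = \sum_(i <- r) f (F i).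
Proof.
move=> fD; have f0 : f 0 = 0 by apply: (addrI (f 0)); rewrite -fD !addr0.
by rewrite (big_morph f fD f0).
Qed.

Section RightModule.
Variables (A : pzRingType) (M : rmod A).

Lemma ract_suml (I : Type) (r : seq I) (F : I -> M) (a : A) :
  ract (\sum_(i <- r) F i) a = \sum_(i <- r) ract (F i) a.
Proof. by rewrite (additive_sum (f := fun m : M => ract m a)) // => m m'; exact: ractDl. Qed.

Lemma ract_sumr (I : Type) (r : seq I) (F : I -> A) (m : M) :
  ract m (\sum_(i <- r) F i) = \sum_(i <- r) ract m (F i).
Proof. by rewrite (additive_sum (f := ract m)) // => a b; exact: ractDr. Qed.

Lemma ract_nat (m : M) (n : nat) : ract m n%:R = m *+ n.
Proof.
elim: n => [|n IHn]; last by rewrite mulrS ractDr ract1 IHn mulrS.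
by rewrite mulr0n; apply: (addrI (ract m 0)); rewrite -ractDr !addr0.
Qed.

End RightModule.

Section RightAction.
Variables (G : groupType) (X : Type) (act : X -> G -> X).
Hypothesis act_right : is_right_action act.

Lemma actK (g : G) : cancel (act^~ g) (act^~ g^-1%g).
Proof. by move=> x /=; rewrite act_right.2 mulgV act_right.1. Qed.

Lemma actVK (g : G) : cancel (act^~ g^-1%g) (act^~ g).
Proof. by move=> x /=; rewrite act_right.2 mulVg act_right.1. Qed.

End RightAction.

Section Averaging.
Variables (k : comPzRingType) (G : groupType) (X : Type) (act : X -> G -> X)
  (A : pzRingType) (iota : {rmorphism k -> A}) (deg : G -> A -> Prop).
Hypotheses (act_right : is_right_action act) (iota_central : central_image iota)
  (deg_grading : is_grading iota deg).
Variables (X' : X -> Prop) (s : list X) (u : k).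
Hypotheses (X'_stable : is_Gsubset act X') (s_enum : enumerates X' s)
  (u_inv : u * (length s)%:R = 1).

Local Notation XT := {classic X}.

Let sX : seq XT := s.
Let shift (g : G) (x : XT) : XT := act x g.

Lemma perm_act_Gsubset (g : G) : perm_eq (map (shift g) sX) sX.
Proof.
have s_uniq : uniq sX by apply/NoDupP; exact: s_enum.1.
apply: uniq_perm => //; first by rewrite map_inj_uniq // => x y /(can_inj (actK act_right g)).
move=> y; apply/idP/idP => [/mapP[x /InP xs ->]|/InP ys].
  by apply/InP/s_enum.2/X'_stable/s_enum.2.
apply/mapP; exists (act y g^-1%g); last by rewrite /shift actVK.
by apply/InP/s_enum.2/X'_stable/s_enum.2.
Qed.

Lemma sum_act_Gsubset (V : zmodType) (F : X -> V) (g : G) :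
  \sum_(x <- s) F (act x g) = \sum_(x <- s) F x.
Proof.
rewrite -(big_map (shift g) xpredT F).
exact: perm_big (perm_act_Gsubset g).
Qed.

Lemma sum_grhom_ract (M N : rmod A) (phi : X -> M -> N) (m : M) (a : A) :
  grhom act deg phi -> \sum_(x <- s) phi x (ract m a) = ract (\sum_(x <- s) phi x m) a.
Proof.
move=> [phiD phiA]; have [r [f [f_deg ->]]] := grading_span deg_grading a.
rewrite !ract_sumr (eq_bigr _ (fun x _ => additive_sum (f := phi x) _ _ (phiD x))).
rewrite exchange_big /=; apply: eq_bigr => g _.
by rewrite -(sum_act_Gsubset _ g) ract_suml; apply: eq_bigr => x _; apply: phiA.
Qed.

Definition average (M N : rmod A) (phi : X -> M -> N) (m : M) : N :=
  ract (\sum_(x <- s) phi x m) (iota u).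

Lemma average_Ahom (M N : rmod A) (phi : X -> M -> N) :
  grhom act deg phi -> is_Ahom (average phi).
Proof.
move=> phi_gr; split=> [m m'|m a]; rewrite /average.
  by rewrite -ractDl -big_split; congr ract; apply: eq_bigr => x _; apply: phi_gr.1.
by rewrite sum_grhom_ract // !ractA iota_central.
Qed.

Lemma average_Gmap (M N : rmod A) (f : M -> N) (m : M) :
  average (@Gmap X A M N f) m = f m.
Proof.
rewrite /average /Gmap sumr_const_length -ract_nat ractA -(rmorph_nat iota).
by rewrite -rmorphM mulrC u_inv rmorph1 ract1.
Qed.

Lemma average_natural (M M' N N' : rmod A) (f : M' -> M) (h : N -> N')
    (phi : X -> M -> N) (m : M') :
  is_Ahom h -> average (fun x => h \o phi x \o f) m = h (average phi (f m)).
Proof. by move=> [hD hA]; rewrite /average hA (additive_sum (f := h)). Qed.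

Lemma average_separable : separable_G act deg.
Proof.
exists average; split; [|split] => *; [exact: average_Ahom|exact: average_Gmap|].
exact: average_natural.
Qed.

End Averaging.

Section HomogeneousComponents.
Variables (k : comPzRingType) (G : groupType) (A : pzRingType)
  (iota : {rmorphism k -> A}) (deg : G -> A -> Prop).
Hypothesis deg_grading : is_grading iota deg.

Definition homogeneous (r : seq (A * G)) : Prop := forall p, p \in r -> deg p.2 p.1.

Definition component (r : seq (A * G)) (h : G) : A := \sum_(p <- r | p.2 == h) p.1.

Lemma deg_opp (g : G) (a : A) : deg g a -> deg g (- a).
Proof. by rewrite -mulN1r -(rmorphN1 iota); apply: (gradingZ deg_grading). Qed.

Lemma deg_component (r : seq (A * G)) (h : G) : homogeneous r -> deg h (component r h).
Proof.
move=> r_hom; rewrite /component big_seq_cond.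
apply: big_ind => [|a b|p /andP[/r_hom + /eqP <-]] //; first exact: (grading0 deg_grading).
exact: (gradingD deg_grading).
Qed.

Lemma homogeneous_decomposition (a : A) :
  exists2 r, homogeneous r & a = \sum_(p <- r) p.1.
Proof.
have [r [f [f_deg ->]]] := grading_span deg_grading a.
by exists [seq (f g, g) | g <- r] => [p /mapP[g _ ->]|]; rewrite ?big_map.
Qed.

Lemma sum_by_degree (F : G -> A) (r : seq (A * G)) (L : seq G) :
  uniq L -> {subset map snd r <= L} ->
  \sum_(p <- r) F p.2 * p.1 = \sum_(h <- L) F h * component r h.
Proof.
move=> L_uniq rL; under [RHS]eq_bigr do rewrite mulr_sumr.
rewrite (exchange_big_dep xpredT) //=; apply: eq_big_seq => p pr.
under eq_bigl do rewrite eq_sym.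
by rewrite (big_pred1_uniq (fun h => F h * p.1)) // rL // map_f.
Qed.

Lemma sum_components (r : seq (A * G)) (L : seq G) :
  uniq L -> {subset map snd r <= L} ->
  \sum_(p <- r) p.1 = \sum_(h <- L) component r h.
Proof.
move=> L_uniq rL; rewrite -[LHS](eq_bigr _ (fun p _ => mul1r p.1)).
by rewrite (sum_by_degree (fun _ => 1) L_uniq rL); apply: eq_bigr => h _; rewrite mul1r.
Qed.

Section TwoDecompositions.
Variables (r r' : seq (A * G)).
Hypotheses (r_hom : homogeneous r) (r'_hom : homogeneous r')
  (eq_sum : \sum_(p <- r) p.1 = \sum_(p <- r') p.1).

Let L : seq G := undup (map snd (r ++ r')).
Let L_uniq : uniq L := undup_uniq _.
Let rL : {subset map snd r <= L}.
Proof. by move=> g gr; rewrite mem_undup map_cat mem_cat gr. Qed.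
Let r'L : {subset map snd r' <= L}.
Proof. by move=> g gr; rewrite mem_undup map_cat mem_cat gr orbT. Qed.

Lemma component_unique (h : G) : component r h = component r' h.
Proof.
have [hL|hNL] := boolP (h \in L); last first.
  have component0 r0 : {subset map snd r0 <= L} -> component r0 h = 0.
    move=> r0L; rewrite /component big1_seq // => p /andP[/eqP ph pr].
    by case/negP: hNL; rewrite -ph r0L // map_f.
  by rewrite !component0.
apply/eqP; rewrite -subr_eq0; apply/eqP.
apply: (grading_direct deg_grading L_uniq (f := fun g => component r g - component r' g)) hL.
  move=> g; apply: (gradingD deg_grading); last apply: deg_opp; exact: deg_component.
by rewrite sumrB -sum_components // -sum_components // eq_sum subrr.
Qed.

Lemma weighted_sum_unique (F : G -> A) :
  \sum_(p <- r) F p.2 * p.1 = \sum_(p <- r') F p.2 * p.1.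
Proof.
rewrite (sum_by_degree F L_uniq rL) (sum_by_degree F L_uniq r'L).
by apply: eq_bigr => h _; rewrite component_unique.
Qed.

End TwoDecompositions.

Definition decomp (a : A) : seq (A * G) := s2val (cid2 (homogeneous_decomposition a)).

Lemma decomp_homogeneous (a : A) : homogeneous (decomp a).
Proof. exact: s2valP (cid2 (homogeneous_decomposition a)). Qed.

Lemma decomp_sum (a : A) : \sum_(p <- decomp a) p.1 = a.
Proof. by rewrite -(s2valP' (cid2 (homogeneous_decomposition a))). Qed.

Lemma decomp_weighted_sum (F : G -> A) (r : seq (A * G)) : homogeneous r ->
  \sum_(p <- decomp (\sum_(p <- r) p.1)) F p.2 * p.1 = \sum_(p <- r) F p.2 * p.1.
Proof.
move=> r_hom; apply: weighted_sum_unique => //; first exact: decomp_homogeneous.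
exact: decomp_sum.
Qed.

End HomogeneousComponents.

Lemma mcoeff_sum_relabel (K : choiceType) (Z : zmodType) (d : {fset K}) (c : K -> Z)
    (sigma tau : K -> K) (y : K) :
  cancel sigma tau -> cancel tau sigma -> (tau y \notin d -> c (tau y) = 0) ->
  (\sum_(x <- d) << c x *g sigma x >>)@_y = c (tau y).
Proof.
move=> sigmaK tauK c0; rewrite raddf_sum /=.
have sigma_eq x : (sigma x == y) = (x == tau y).
  by apply/eqP/eqP => [<-|->]; rewrite ?sigmaK ?tauK.
under eq_bigr do rewrite mcoeffU sigma_eq mulrb.
rewrite -big_mkcond /=; have [yd|yNd] := boolP (tau y \in d).
  by rewrite big_pred1_uniq // fset_uniq.
by rewrite c0 // big1_seq // => x /andP[/eqP-> yd]; rewrite yd in yNd.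
Qed.

Definition regular (A : pzRingType) : rmod A :=
  @RMod A A (fun m a => m * a) (fun a m m' => mulrDl m m' a) (fun m a b => mulrDr m a b)
    (fun m => mulr1 m) (fun m a b => esym (mulrA m a b)).

Section TwistedModule.
Variables (k : comPzRingType) (G : groupType) (X : Type) (act : X -> G -> X)
  (A : pzRingType) (iota : {rmorphism k -> A}) (deg : G -> A -> Prop).
Hypotheses (act_right : is_right_action act) (deg_grading : is_grading iota deg).

Local Notation XT := {classic X}.
Local Notation V := {malg A[XT]}.
Local Notation decomp := (decomp deg_grading).

(* V is kX ⊗ A; [twist f b g] is f·b for b ∈ A_g, and [twisted_act f a] sums these over
   a homogeneous decomposition of a, which [decomp_weighted_sum] shows to be irrelevant. *)

Definition twist (f : V) (b : A) (g : G) : V :=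
  \sum_(x <- msupp f) << f@_x * b *g (act x g : XT) >>.

Lemma mcoeff_twist (f : V) (b : A) (g : G) (y : XT) :
  (twist f b g)@_y = f@_(act y g^-1%g : XT) * b.
Proof.
rewrite (mcoeff_sum_relabel (tau := fun x : XT => act x g^-1%g : XT)) //.
- exact: actK.
- exact: actVK.
- by move/mcoeff_outdom->; rewrite mul0r.
Qed.

Definition twisted_act (f : V) (a : A) : V := \sum_(p <- decomp a) twist f p.1 p.2.

Lemma mcoeff_twisted_act (f : V) (a : A) (y : XT) :
  (twisted_act f a)@_y = \sum_(p <- decomp a) f@_(act y p.2^-1%g : XT) * p.1.
Proof. by rewrite raddf_sum /=; apply: eq_bigr => p _; rewrite mcoeff_twist. Qed.

Lemma twisted_act_homogeneous (f : V) (r : seq (A * G)) : homogeneous deg r ->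
  twisted_act f (\sum_(p <- r) p.1) = \sum_(p <- r) twist f p.1 p.2.
Proof.
move=> r_hom; apply/malgP => y; rewrite mcoeff_twisted_act raddf_sum /=.
under [RHS]eq_bigr do rewrite mcoeff_twist.
exact: (decomp_weighted_sum deg_grading (fun h => f@_(act y h^-1%g : XT)) r_hom).
Qed.

Lemma twisted_actDl (a : A) (f f' : V) :
  twisted_act (f + f') a = twisted_act f a + twisted_act f' a.
Proof.
apply/malgP => y; rewrite mcoeffD !mcoeff_twisted_act -big_split /=.
by apply: eq_bigr => p _; rewrite mcoeffD mulrDl.
Qed.

Lemma twisted_actDr (f : V) (a b : A) :
  twisted_act f (a + b) = twisted_act f a + twisted_act f b.
Proof.
have ab_hom : homogeneous deg (decomp a ++ decomp b).
  by move=> p; rewrite mem_cat => /orP[]; apply: decomp_homogeneous.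
by rewrite -{1}(decomp_sum deg_grading a) -{1}(decomp_sum deg_grading b) -big_cat
  twisted_act_homogeneous // big_cat.
Qed.

Lemma twisted_act1 (f : V) : twisted_act f 1 = f.
Proof.
have one_hom : homogeneous deg [:: (1, 1%g)].
  by move=> p; rewrite inE => /eqP->; apply: (grading1 deg_grading).
have -> : 1 = \sum_(p <- [:: (1 : A, 1%g : G)]) p.1 by rewrite big_seq1.
rewrite twisted_act_homogeneous // big_seq1.
by apply/malgP => y; rewrite mcoeff_twist invg1 act_right.1 mulr1.
Qed.

Lemma twisted_actA (f : V) (a b : A) : twisted_act (twisted_act f a) b = twisted_act f (a * b).
Proof.
pose r := [seq (p.1 * q.1, (p.2 * q.2)%g) | p <- decomp a, q <- decomp b].
have r_hom : homogeneous deg r.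
  move=> _ /allpairsP[[p q] [/decomp_homogeneous p_deg /decomp_homogeneous q_deg ->]].
  exact: (gradingM deg_grading).
have -> : a * b = \sum_(pq <- r) pq.1.
  rewrite big_allpairs_dep /= -{1}(decomp_sum deg_grading a) mulr_suml.
  by apply: eq_bigr => p _; rewrite -{1}(decomp_sum deg_grading b) mulr_sumr.
apply/malgP => y; rewrite mcoeff_twisted_act twisted_act_homogeneous //.
rewrite raddf_sum /= big_allpairs_dep /=.
under eq_bigr do rewrite mcoeff_twisted_act mulr_suml.
rewrite exchange_big /=; apply: eq_bigr => p _; apply: eq_bigr => q _.
by rewrite mcoeff_twist act_right.2 invgM mulrA.
Qed.

Definition twisted : rmod A := RMod twisted_actDl twisted_actDr twisted_act1 twisted_actA.

Definition augment (f : V) : A := \sum_(x <- msupp f) f@_x.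

Lemma augment_incl (f : V) (d : {fset XT}) :
  (msupp f `<=` d)%fset -> augment f = \sum_(x <- d) f@_x.
Proof. by move=> fd; apply: big_fset_incl => // x _ /mcoeff_outdom. Qed.

Lemma augmentD : {morph augment : f f' / f + f'}.
Proof.
move=> f f'; rewrite (@augment_incl (f + f') (msupp f `|` msupp f')%fset) ?msuppD_le //.
rewrite (@augment_incl f (msupp f `|` msupp f')%fset) ?fsubsetUl //.
rewrite (@augment_incl f' (msupp f `|` msupp f')%fset) ?fsubsetUr //.
by rewrite -big_split; apply: eq_bigr => x _; rewrite mcoeffD.
Qed.

Lemma augmentU (c : A) (x : XT) : augment << c *g x >> = c.
Proof. by rewrite (augment_incl msuppU_le) big_seq_fset1 mcoeffUU. Qed.

Lemma augment_twist (f : V) (b : A) (g : G) : augment (twist f b g) = augment f * b.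
Proof.
rewrite (additive_sum (f := augment)); last exact: augmentD.
by rewrite mulr_suml; apply: eq_bigr => x _; rewrite augmentU.
Qed.

Lemma augment_Ahom : is_Ahom (M := twisted) (N := regular A) augment.
Proof.
split=> [|f a]; first exact: augmentD.
rewrite /= /twisted_act (additive_sum (f := augment)); last exact: augmentD.
under eq_bigr do rewrite augment_twist.
by rewrite -mulr_sumr decomp_sum.
Qed.

Definition lmul (b : A) (f : V) : V := \sum_(x <- msupp f) << b * f@_x *g x >>.

Lemma mcoeff_lmul (b : A) (f : V) (y : XT) : (lmul b f)@_y = b * f@_y.
Proof.
rewrite (mcoeff_sum_relabel (tau := id)) //.
by move/mcoeff_outdom->; rewrite mulr0.
Qed.

Lemma lmul_Ahom (b : A) : is_Ahom (M := twisted) (N := twisted) (lmul b).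
Proof.
split=> [f f'|f a]; apply/malgP => y.
  by rewrite mcoeffD !mcoeff_lmul mcoeffD mulrDr.
rewrite /= mcoeff_lmul !mcoeff_twisted_act mulr_sumr; apply: eq_bigr => p _.
by rewrite mcoeff_lmul mulrA.
Qed.

Definition unit_family (x : X) (n : A) : V := << n *g (x : XT) >>.

Lemma unit_family_grhom : grhom act deg (M := regular A) (N := twisted) unit_family.
Proof.
split=> [x n n'|x g a n a_deg]; first exact: monalgUD.
have ag_hom : homogeneous deg [:: (a, g)] by move=> p; rewrite inE => /eqP->.
have ag_sum : \sum_(p <- [:: (a, g)]) p.1 = a by rewrite big_seq1.
rewrite /= -[X in twisted_act _ X]ag_sum twisted_act_homogeneous // big_seq1.
apply/malgP => y; rewrite mcoeff_twist !mcoeffU /=.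
have -> : ((x : XT) == act y g^-1%g) = ((act x g : XT) == y).
  by apply/eqP/eqP => [->|<-]; rewrite ?actVK ?actK.
by case: eqP; rewrite ?mul0r.
Qed.

End TwistedModule.

Section SeparableFiniteSupport.
Variables (k : comPzRingType) (G : groupType) (X : Type) (act : X -> G -> X)
  (A : pzRingType) (iota : {rmorphism k -> A}) (deg : G -> A -> Prop).
Hypotheses (act_right : is_right_action act) (deg_grading : is_grading iota deg).
Variable P : forall M N : rmod A, (X -> M -> N) -> M -> N.
Hypotheses (P_Ahom : forall (M N : rmod A) (phi : X -> M -> N),
              grhom act deg phi -> is_Ahom (P phi))
  (P_Gmap : forall (M N : rmod A) (f : M -> N),
              is_Ahom f -> forall m, P (@Gmap X A M N f) m = f m)
  (P_natural : forall (M M' N N' : rmod A) (f : M' -> M) (h : N -> N') (phi : X -> M -> N),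
    is_Ahom f -> is_Ahom h -> grhom act deg phi ->
    forall m, P (fun x => h \o phi x \o f) m = h (P phi (f m))).

Local Notation XT := {classic X}.
Local Notation V := (twisted act_right deg_grading).

Let nu : {malg A[XT]} := P (M := regular A) (N := V) (@unit_family X A) 1.

Let id_Ahom (M : rmod A) : is_Ahom (M := M) (N := M) id.
Proof. by []. Qed.

Lemma augment_nu : augment nu = 1.
Proof.
have := P_natural (id_Ahom _) (augment_Ahom act_right deg_grading)
  (unit_family_grhom act_right deg_grading) 1.
have -> : (fun x => @augment X A \o @unit_family X A x \o id) =
          @Gmap X A (regular A) (regular A) id.
  by apply: funext => x; apply: funext => n /=; rewrite augmentU.
by rewrite P_Gmap.
Qed.

Let lmul_regular_Ahom (b : A) : is_Ahom (M := regular A) (N := regular A) ( *%R b).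
Proof. by split=> [m m'|m a] /=; rewrite ?mulrDr ?mulrA. Qed.

Lemma nu_commute (g : G) (b : A) (y : XT) :
  deg g b -> b * nu@_y = nu@_(act y g^-1%g : XT) * b.
Proof.
move=> b_deg; have grU := unit_family_grhom act_right deg_grading.
(* Both sides equal P applied to x ↦ (n ↦ x ⊗ b n), by naturality. *)
have lmul_nu : lmul b nu = P (M := regular A) (N := V) (@unit_family X A) b.
  rewrite -(P_natural (id_Ahom _) (lmul_Ahom act_right deg_grading b) grU).
  rewrite -[b in RHS]mulr1 -(P_natural (lmul_regular_Ahom b) (id_Ahom V) grU).
  suff -> : (fun x => lmul b \o @unit_family X A x \o id) =
            (fun x => id \o @unit_family X A x \o *%R b) by [].
  apply: funext => x; apply: funext => n; apply/malgP => z /=.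
  by rewrite mcoeff_lmul !mcoeffU mulrnAr.
have nu_act :
    twisted_act act deg_grading nu b = P (M := regular A) (N := V) (@unit_family X A) b.
  by rewrite -[b in RHS]mul1r; apply: (esym ((P_Ahom grU).2 1 b)).
have b_hom : homogeneous deg [:: (b, g)] by move=> p; rewrite inE => /eqP->.
have bg_sum : \sum_(p <- [:: (b, g)]) p.1 = b by rewrite big_seq1.
rewrite -mcoeff_lmul lmul_nu -nu_act -[X in twisted_act _ _ _ X]bg_sum.
by rewrite twisted_act_homogeneous // big_seq1 mcoeff_twist.
Qed.

Lemma nu_supp_stable : strongly_graded deg ->
  forall (x : XT) (g : G), x \in msupp nu -> (act x g : XT) \in msupp nu.
Proof.
move=> strong x g; rewrite -!mcoeff_neq0; apply: contraNneq => nu_xg.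
have one_deg : deg (g * g^-1)%g 1 by rewrite mulgV; apply: (grading1 deg_grading).
have [s [s_deg one_eq]] := strong _ _ _ one_deg.
rewrite -[nu@_x]mul1r one_eq mulr_suml big1_seq // => p /andP[_ ps].
by rewrite -mulrA (nu_commute _ (s_deg p ps).2) invgK nu_xg mul0r mulr0.
Qed.

Lemma nu_supp_finite_Gsubset : (1 : A) <> 0 -> strongly_graded deg ->
  exists (X' : X -> Prop) (s : list X), is_Gsubset act X' /\ enumerates X' s /\ s <> nil.
Proof.
move=> one_neq0 strong.
exists (fun x => (x : XT) \in msupp nu), (msupp nu : seq XT); split; [|split].
- by move=> x g; apply: nu_supp_stable.
- by split=> [|x]; [apply/(@NoDupP XT)/fset_uniq|split=> /(@InP XT)].
- by move=> supp_nil; apply: one_neq0; rewrite -augment_nu /augment supp_nil big_nil.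
Qed.

End SeparableFiniteSupport.

Theorem corollary3p8p3 (k : comPzRingType) (G : groupType) (X : Type)
  (act : X -> G -> X) (A : pzRingType) (iota : {rmorphism k -> A})
  (deg : G -> A -> Prop) :
  is_right_action act -> central_image iota -> is_grading iota deg ->
  ((exists (X' : X -> Prop) (s : list X),
       is_Gsubset act X' /\ enumerates X' s /\ s <> nil /\
       invertible ((length s)%:R : k)) ->
     separable_G act deg) /\
  ((1 : A) <> 0 -> strongly_graded deg -> separable_G act deg ->
     exists (X' : X -> Prop) (s : list X),
       is_Gsubset act X' /\ enumerates X' s /\ s <> nil).
Proof.
move=> act_right iota_central deg_grading; split.
  move=> [X' [s [X'_stable [s_enum [_ [u u_inv]]]]]].
  exact: (average_separable act_right iota_central deg_grading X'_stable s_enum u_inv).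
move=> one_neq0 strong [P [P_Ahom [P_Gmap P_natural]]].
exact: (nu_supp_finite_Gsubset act_right deg_grading P_Ahom P_Gmap P_natural one_neq0 strong).
Qed.
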